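(* Let $\lambda$ be a nonzero real number and $n\ge1$ an integer. Then, as polynomials in $x$, $$\sum_{k=1}^{n}S_{2,\lambda}(n,k)\frac{x^{k}}{k}=\frac{1}{n}\sum_{j=0}^{n-1}\binom{n}{j}\beta_{j,\lambda}(1-\lambda)\,\phi_{n-j,\lambda}(x).$$ In particular, for $x=1$, $$\sum_{k=1}^{n}\frac{S_{2,\lambda}(n,k)}{k}=\frac{1}{n}\sum_{j=0}^{n-1}\binom{n}{j}\beta_{j,\lambda}(1-\lambda)\,\phi_{n-j,\lambda},$$ where $\phi_{m,\lambda}=\phi_{m,\lambda}(1)$.
   Context: For real $y$ and integer $k\ge0$: $(y)_{0,\lambda}=1$, $(y)_{k,\lambda}=y(y-\lambda)\cdots(y-(k-1)\lambda)$; $(y)_0=1$, $(y)_k=y(y-1)\cdots(y-k+1)$. The degenerate exponential is $e_\lambda^x(t)=\sum_{k\ge0}(x)_{k,\lambda}t^k/k!=(1+\lambda t)^{x/\lambda}$, $e_\lambda(t)=e^1_\lambda(t)$. The degenerate Bernoulli polynomials are defined by $\frac{t}{e_\lambda(t)-1}e_\lambda^x(t)=\sum_{n\ge0}\beta_{n,\lambda}(x)\frac{t^n}{n!}$. The degenerate Bell polynomials are defined by $e^{x(e_\lambda(t)-1)}=\sum_{n\ge0}\phi_{n,\lambda}(x)\frac{t^n}{n!}$, and the degenerate Bell numbers are $\phi_{n,\lambda}=\phi_{n,\lambda}(1)$. The degenerate Stirling numbers of the second kind are defined by $(x)_{n,\lambda}=\sum_{k=0}^{n}S_{2,\lambda}(n,k)(x)_{k}$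 ($n\ge0$). *)

From HB Require Import structures.
From mathcomp Require Import all_boot all_order all_algebra.
Set Implicit Arguments. Unset Strict Implicit. Unset Printing Implicit Defensive.
Import Order.TTheory GRing.Theory Num.Theory.
Local Open Scope ring_scope.

Section Defs.
Variable R : realFieldType.

Definition dfall (lam y : R) (k : nat) : R := \prod_(i < k) (y - i%:R * lam).

Definition ffall (y : R) (k : nat) : R := \prod_(i < k) (y - i%:R).

(* Formal exponential generating series: a sequence a represents
   sum_n a n * t^n / n!.  Product of such series (binomial convolution). *)
Definition egf_mul (a b : nat -> R) : nat -> R :=
  fun n => \sum_(j < n.+1) 'C(n, j)%:R * a j * b (n - j)%N.

Fixpoint egf_pow (a : nat -> R) (k : nat) : nat -> R :=
  match k with
  | O => fun n => (n == 0%N)%:R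
  | S k' => egf_mul a (egf_pow a k')
  end.

(* EGF coefficients of e_lambda(t) - 1 *)
Definition egf_edeg_m1 (lam : R) : nat -> R :=
  fun n => dfall lam 1 n - (n == 0%N)%:R.

(* Degenerate Bell polynomial phi_{n,lambda}(x), defined as the coefficient
   of t^n/n! in e^{x (e_lambda(t) - 1)} = sum_k x^k/k! (e_lambda(t)-1)^k
   (formal composition; only k <= n contribute since e_lambda(t)-1 has
   no constant term). *)
Definition dbell_poly (lam : R) (n : nat) : {poly R} :=
  \sum_(k < n.+1) (egf_pow (egf_edeg_m1 lam) k n / k`!%:R) *: 'X^k.

Definition dbell (lam : R) (n : nat) : R := (dbell_poly lam n).[1].

Definition is_dstirling2 (lam : R) (S : nat -> nat -> R) : Prop :=
  forall (n : nat) (x : R), dfall lam x n = \sum_(k < n.+1) S n k * ffall x k.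

(* beta is the family of degenerate Bernoulli polynomials:
   t/(e_lambda(t) - 1) e_lambda^x(t) = sum_n beta x n t^n/n!,
   stated as the formal power series identity
   (sum_n beta x n t^n/n!) * ((e_lambda(t) - 1)/t) = e_lambda^x(t),
   where (e_lambda(t)-1)/t = sum_m (1)_{m+1,lambda}/(m+1) t^m/m!. *)
Definition is_dbernoulli (lam : R) (beta : R -> nat -> R) : Prop :=
  forall (x : R) (n : nat),
    egf_mul (beta x) (fun m => dfall lam 1 m.+1 / m.+1%:R) n = dfall lam x n.

End Defs.

From HB Require Import structures.
From mathcomp Require Import all_boot all_order all_algebra ring zify.
Set Implicit Arguments. Unset Strict Implicit. Unset Printing Implicit Defensive.
Import Order.TTheory GRing.Theory Num.Theory.
Local Open Scope ring_scope.

(* Write E(t) = e_lam(t) - 1 and B(t) = t e_lam^(1 - lam)(t) / E(t), the generating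
   function of beta_j(1 - lam).  S(n, k) is the coefficient of t^n / n! in E^k / k!:
   both expansions of (x)_{n,lam} in falling factorials obey the recurrence coming from
   (1 + lam t) d/dt e_lam^x = x e_lam^x, and such expansions are unique.  Since
   t E'(t) = t e_lam^(1 - lam)(t) = B(t) E(t), the Euler operator gives
   t d/dt E^k = k B E^k, i.e. n S(n, k) = k sum_j C(n, j) beta_j(1 - lam) S(n - j, k).
   Dividing by n k and summing against x^k gives the polynomial identity. *)

Section Egf.
Variable R : realFieldType.
Implicit Types (a b c : nat -> R) (p q : {poly R}).

Lemma natr_fact_neq0 n : (n`!%:R : R) != 0.
Proof. by rewrite pnatr_eq0 -lt0n fact_gt0. Qed.

(* On coefficients of sum_m a_m t^m / m!, [egf_deriv] is d/dt and [egf_euler] is t d/dt. *)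
Definition egf_deriv a : nat -> R := fun m => a m.+1.
Definition egf_euler a : nat -> R := fun m => m%:R * a m.

Lemma eq_egf_mul a a' b b' n :
  (forall m, (m <= n)%N -> a m = a' m) -> (forall m, (m <= n)%N -> b m = b' m) ->
  egf_mul a b n = egf_mul a' b' n.
Proof.
move=> eq_a eq_b; apply: eq_bigr => -[j /= lt_jn] _.
by rewrite eq_a ?eq_b ?leq_subr.
Qed.

Lemma egf_mul1l b n : egf_mul (fun m => (m == 0%N)%:R) b n = b n.
Proof.
rewrite /egf_mul big_ord_recl big1 => [|i _]; last by rewrite mulr0 mul0r.
by rewrite bin0 subn0 !mul1r addr0.
Qed.

Lemma egf_mulDl a a' b n :
  egf_mul (fun m => a m + a' m) b n = egf_mul a b n + egf_mul a' b n.
Proof. by rewrite /egf_mul -big_split; apply: eq_bigr => i _ /=; ring. Qed.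

Lemma egf_mulDr a b b' n :
  egf_mul a (fun m => b m + b' m) n = egf_mul a b n + egf_mul a b' n.
Proof. by rewrite /egf_mul -big_split; apply: eq_bigr => i _ /=; ring. Qed.

Lemma egf_mulZl x a b n : egf_mul (fun m => x * a m) b n = x * egf_mul a b n.
Proof. by rewrite /egf_mul mulr_sumr; apply: eq_bigr => i _ /=; ring. Qed.

Lemma egf_mulZr x a b n : egf_mul a (fun m => x * b m) n = x * egf_mul a b n.
Proof. by rewrite /egf_mul mulr_sumr; apply: eq_bigr => i _ /=; ring. Qed.

Lemma egf_pow_small a k n : a 0%N = 0 -> (n < k)%N -> egf_pow a k n = 0.
Proof.
move=> a0; elim: k n => [//|k IHk] n lt_nk /=.
rewrite /egf_mul big1 // => -[[|j] /= lt_jn] _; first by rewrite a0 mulr0 mul0r.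
by rewrite IHk ?mulr0 //; lia.
Qed.

(* Truncations turn [egf_mul] into the product of {poly R}, from which commutativity,
   associativity and the Leibniz rule for d/dt are inherited. *)
Definition egf_trunc a n : {poly R} := \poly_(i < n.+1) (a i / i`!%:R).

Lemma coef_egf_trunc a n i : (i <= n)%N -> (egf_trunc a n)`_i = a i / i`!%:R.
Proof. by move=> le_in; rewrite coef_poly ltnS le_in. Qed.

Lemma coefM_egf p q a b n :
  (forall i, (i <= n)%N -> p`_i = a i / i`!%:R) ->
  (forall i, (i <= n)%N -> q`_i = b i / i`!%:R) ->
  (p * q)`_n = egf_mul a b n / n`!%:R.
Proof.
move=> pE qE; rewrite coefM /egf_mul mulr_suml; apply: eq_bigr => -[j /= lt_jn] _.
have le_jn : (j <= n)%N by [].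
rewrite pE // qE ?leq_subr // -(bin_fact le_jn) !natrM.
have := natr_fact_neq0 j; have := natr_fact_neq0 (n - j).
have : ('C(n, j)%:R : R) != 0 by rewrite pnatr_eq0 -lt0n bin_gt0.
by move=> *; field; apply/and3P.
Qed.

Lemma coef_egf_truncM a b n i : (i <= n)%N ->
  (egf_trunc a n * egf_trunc b n)`_i = egf_mul a b i / i`!%:R.
Proof.
by move=> le_in; apply: coefM_egf => j le_ji; rewrite coef_egf_trunc ?(leq_trans le_ji).
Qed.

Lemma egf_mulC a b n : egf_mul a b n = egf_mul b a n.
Proof.
apply: (mulIf (invr_neq0 (natr_fact_neq0 n))).
by rewrite -(coef_egf_truncM a b (leqnn n)) -(coef_egf_truncM b a (leqnn n)) mulrC.
Qed.

Lemma egf_mulA a b c n : egf_mul a (egf_mul b c) n = egf_mul (egf_mul a b) c n.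
Proof.
apply: (mulIf (invr_neq0 (natr_fact_neq0 n))).
rewrite -(coefM_egf (@coef_egf_trunc a n) (@coef_egf_truncM b c n)).
by rewrite -(coefM_egf (@coef_egf_truncM a b n) (@coef_egf_trunc c n)) mulrA.
Qed.

Lemma egf_deriv_mul a b n :
  egf_deriv (egf_mul a b) n = egf_mul (egf_deriv a) b n + egf_mul a (egf_deriv b) n.
Proof.
have fact_Sn (x : R) i : x / i.+1`!%:R *+ i.+1 = x / i`!%:R.
  rewrite factS natrM -mulr_natr; have fact_neq0 := natr_fact_neq0 i.
  by field; rewrite fact_neq0 addrC natr1 pnatr_eq0.
apply: (mulIf (invr_neq0 (natr_fact_neq0 n))); rewrite mulrDl /egf_deriv.
have deriv_trunc d i : (i <= n)%N -> (egf_trunc d n.+1)^`()`_i = d i.+1 / i`!%:R.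
  by move=> le_in; rewrite coef_deriv coef_egf_trunc // fact_Sn.
have trunc d i : (i <= n)%N -> (egf_trunc d n.+1)`_i = d i / i`!%:R.
  by move=> le_in; rewrite coef_egf_trunc // ltnW.
rewrite -(coefM_egf (deriv_trunc a) (trunc b)) -(coefM_egf (trunc a) (deriv_trunc b)).
by rewrite -coefD -derivM coef_deriv coef_egf_truncM // fact_Sn.
Qed.

Lemma egf_euler_mul a b n :
  egf_euler (egf_mul a b) n = egf_mul (egf_euler a) b n + egf_mul a (egf_euler b) n.
Proof.
rewrite /egf_euler /egf_mul mulr_sumr -big_split; apply: eq_bigr => -[j /= lt_jn] _.
by rewrite -[in n%:R](subnKC (lt_jn : (j <= n)%N)) natrD; ring.
Qed.

Lemma egf_mul_sum_ltn a b n : b 0%N = 0 ->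
  egf_mul a b n = \sum_(j < n) 'C(n, j)%:R * a j * b (n - j)%N.
Proof. by move=> b0; rewrite /egf_mul big_ord_recr /= subnn b0 mulr0 addr0. Qed.

(* [fun m => b m.+1 / m.+1%:R] are the coefficients of b(t) / t. *)
Lemma egf_mul_divX a b n : b 0%N = 0 ->
  egf_mul a b n.+1 = n.+1%:R * egf_mul a (fun m => b m.+1 / m.+1%:R) n.
Proof.
move=> b0; rewrite egf_mul_sum_ltn // /egf_mul mulr_sumr.
apply: eq_bigr => -[j /= le_jn] _; rewrite subSn //.
have binS_down : ('C(n.+1, j)%:R : R) = n.+1%:R * 'C(n, j)%:R / (n - j).+1%:R.
  rewrite -natrM (mul_bin_down n.+1 j) subSn // natrM.
  by rewrite [_ * 'C(_, _)%:R]mulrC mulfK ?pnatr_eq0.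
by rewrite binS_down; field; rewrite addrC natr1 pnatr_eq0.
Qed.

End Egf.

Section FallingFactorial.
Variable R : realFieldType.

Lemma ffallS (x : R) k : ffall x k.+1 = ffall x k * (x - k%:R).
Proof. by rewrite /ffall big_ord_recr. Qed.

Lemma dfallS (lam x : R) k : dfall lam x k.+1 = dfall lam x k * (x - k%:R * lam).
Proof. by rewrite /dfall big_ord_recr. Qed.

Lemma dfall1S (lam : R) k : dfall lam 1 k.+1 = dfall lam (1 - lam) k.
Proof.
rewrite /dfall big_ord_recl mul0r subr0 mul1r; apply: eq_bigr => i _.
by rewrite lift0 -addn1 natrD; ring.
Qed.

Lemma ffall_nat_small m k : (m < k)%N -> ffall (m%:R : R) k = 0.
Proof. by move=> lt_mk; rewrite /ffall (bigD1 (Ordinal lt_mk)) //= subrr mul0r. Qed.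

Lemma ffall_nat_neq0 m : ffall (m%:R : R) m != 0.
Proof.
apply/prodf_neq0 => -[i /= lt_im] _.
by rewrite -natrB ?pnatr_eq0 ?subn_eq0 -?ltnNge // ltnW.
Qed.

(* At x = m%:R the sum is triangular: ffall m k vanishes for k > m but not for k = m. *)
Lemma ffall_sum_eq0 n (c : nat -> R) :
  (forall x : R, \sum_(k < n.+1) c k * ffall x k = 0) ->
  forall m, (m <= n)%N -> c m = 0.
Proof.
move=> sum_eq0 m; elim/ltn_ind: m => m IHm le_mn.
have := sum_eq0 m%:R; rewrite (bigD1 (Ordinal (le_mn : (m < n.+1)%N))) //= big1.
  by rewrite addr0 => /eqP; rewrite mulf_eq0 (negPf (ffall_nat_neq0 m)) orbF => /eqP.
move=> [k /= lt_kn]; rewrite -val_eqE /= => neq_km.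
case: (ltngtP k m) neq_km => // [lt_km | lt_mk] _; last by rewrite ffall_nat_small ?mulr0.
by rewrite IHm ?mul0r // (leq_trans (ltnW lt_km)).
Qed.

End FallingFactorial.

Section DegenerateStirling.
Variables (R : realFieldType) (lam : R).
Local Notation E := (egf_edeg_m1 lam).

Definition dstirling2 n k : R := egf_pow E k n / k`!%:R.

(* The operator (1 + lam t) d/dt, which maps e_lam^x(t) to x e_lam^x(t). *)
Definition egf_dderiv (a : nat -> R) : nat -> R :=
  fun m => egf_deriv a m + lam * egf_euler a m.

Lemma egf_dderiv_mul a b n :
  egf_dderiv (egf_mul a b) n = egf_mul (egf_dderiv a) b n + egf_mul a (egf_dderiv b) n.
Proof.
rewrite /egf_dderiv egf_deriv_mul egf_euler_mul egf_mulDl egf_mulDr.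
by rewrite egf_mulZl egf_mulZr; ring.
Qed.

Lemma egf_edeg_m1_0 : E 0%N = 0.
Proof. by rewrite /egf_edeg_m1 /dfall big_ord0 subrr. Qed.

Lemma egf_dderiv_edeg_m1 m : egf_dderiv E m = E m + (m == 0%N)%:R.
Proof.
rewrite /egf_dderiv /egf_deriv /egf_euler /egf_edeg_m1 dfallS.
by case: m => [|m] /=; rewrite /dfall ?big_ord0; ring.
Qed.

Lemma egf_dderiv_pow k n :
  egf_dderiv (egf_pow E k) n = k%:R * (egf_pow E k n + egf_pow E k.-1 n).
Proof.
elim: k n => [|k IHk] n.
  by rewrite /egf_dderiv /egf_deriv /egf_euler /=; case: n => [|n] /=; ring.
rewrite [egf_pow E k.+1]/= egf_dderiv_mul.
rewrite (eq_egf_mul (fun m _ => egf_dderiv_edeg_m1 m) (fun m _ => erefl (egf_pow E k m))).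
rewrite (eq_egf_mul (fun m _ => erefl (E m)) (fun m _ => IHk m)).
rewrite egf_mulDl egf_mul1l egf_mulZr egf_mulDr.
case: k {IHk} => [|k] /=; first by rewrite !mul0r; ring.
by rewrite -(addn1 k.+1) natrD; ring.
Qed.

Lemma dstirling2_small n k : (n < k)%N -> dstirling2 n k = 0.
Proof. by move=> lt_nk; rewrite /dstirling2 egf_pow_small ?egf_edeg_m1_0 ?mul0r. Qed.

Lemma dstirling2S n k :
  dstirling2 n.+1 k = (k%:R - lam * n%:R) * dstirling2 n k
                      + (if k is k'.+1 then dstirling2 n k' else 0).
Proof.
have := egf_dderiv_pow k n; rewrite /egf_dderiv /egf_deriv /egf_euler /dstirling2.
move=> /(canRL (addrK _)) ->.
case: k => [|k] /=; first by rewrite fact0; ring.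
rewrite factS natrM; have := natr_fact_neq0 R k => fact_neq0.
by field; rewrite fact_neq0 addrC natr1 pnatr_eq0.
Qed.

Lemma dstirling2P : is_dstirling2 lam dstirling2.
Proof.
move=> n x; elim: n => [|n IHn].
  by rewrite big_ord1 /ffall /dfall !big_ord0 /dstirling2 /= fact0 divr1 mulr1.
rewrite dfallS IHn mulr_suml; apply/esym.
under eq_bigr do rewrite dstirling2S mulrDl.
rewrite big_split /= big_ord_recr /= (dstirling2_small (ltnSn n)) mulr0 mul0r addr0.
rewrite [X in _ + X]big_ord_recl /= mul0r add0r -big_split /=.
apply: eq_bigr => i _.
by rewrite -[bump 0 i]/i.+1 add0n ffallS; ring.
Qed.

Lemma is_dstirling2_uniq S n k : is_dstirling2 lam S -> (k <= n)%N ->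
  S n k = dstirling2 n k.
Proof.
move=> S_dS le_kn; apply/eqP; rewrite -subr_eq0; apply/eqP.
apply: (@ffall_sum_eq0 _ n (fun k => S n k - dstirling2 n k)) => // x.
under eq_bigr do rewrite mulrBl.
by rewrite sumrB -S_dS -dstirling2P subrr.
Qed.

End DegenerateStirling.

Section DegenerateBernoulli.
Variables (R : realFieldType) (lam : R) (beta : R -> nat -> R).
Hypothesis beta_dB : is_dbernoulli lam beta.
Local Notation E := (egf_edeg_m1 lam).
Local Notation B := (beta (1 - lam)).

(* t d/dt (e_lam(t) - 1) = t e_lam^(1 - lam)(t) = B(t) (e_lam(t) - 1). *)
Lemma egf_euler_edeg_m1 n : egf_euler E n = egf_mul B E n.
Proof.
case: n => [|n].
  by rewrite /egf_euler mul0r /egf_mul big_ord1 egf_edeg_m1_0 mulr0.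
rewrite egf_mul_divX ?egf_edeg_m1_0 // /egf_euler; congr (_ * _).
rewrite /egf_edeg_m1 subr0 dfall1S -(beta_dB (1 - lam) n).
by apply: eq_egf_mul => m _ //; rewrite subr0.
Qed.

Lemma egf_euler_pow k n :
  egf_euler (egf_pow E k) n = k%:R * egf_mul B (egf_pow E k) n.
Proof.
elim: k n => [|k IHk] n.
  by rewrite /egf_euler mul0r; case: n => [|n] /=; rewrite ?mulr0n ?mul0r ?mulr0.
rewrite [egf_pow E k.+1]/= egf_euler_mul.
rewrite (eq_egf_mul (fun m _ => egf_euler_edeg_m1 m) (fun m _ => erefl (egf_pow E k m))).
rewrite (eq_egf_mul (fun m _ => erefl (E m)) (fun m _ => IHk m)) egf_mulZr.
have -> : egf_mul E (egf_mul B (egf_pow E k)) n = egf_mul B (egf_mul E (egf_pow E k)) n.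
  by rewrite egf_mulA [RHS]egf_mulA; apply: eq_egf_mul => // m _; apply: egf_mulC.
by rewrite -egf_mulA -(addn1 k) natrD; ring.
Qed.

(* For k = 0 both sides vanish, the left one because 0^-1 = 0. *)
Lemma dstirling2_divn n k : (0 < n)%N ->
  dstirling2 lam n k / k%:R
    = n%:R^-1 * \sum_(0 <= j < n) 'C(n, j)%:R * B j * dstirling2 lam (n - j) k.
Proof.
case: k => [|k] n_gt0.
  rewrite mulr0n invr0 mulr0 big_nat big1 ?mulr0 // => j /andP [_ lt_jn].
  by rewrite /dstirling2 /= subn_eq0 leqNgt lt_jn mul0r mulr0.
have := egf_euler_pow k.+1 n.
rewrite /egf_euler egf_mul_sum_ltn => [euler_pow|]; last first.
  exact: egf_pow_small (egf_edeg_m1_0 lam) (ltn0Sn k).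
rewrite /dstirling2 big_mkord; under eq_bigr do rewrite mulrA.
rewrite -mulr_suml.
have -> : \sum_(j < n) 'C(n, j)%:R * B j * egf_pow E k.+1 (n - j)
            = n%:R * egf_pow E k.+1 n / k.+1%:R.
  by rewrite euler_pow mulrAC mulfV ?mul1r ?pnatr_eq0.
have := natr_fact_neq0 R k.+1; have : (n%:R : R) != 0 by rewrite pnatr_eq0 -lt0n.
by move=> n_neq0 fact_neq0; field; rewrite n_neq0 fact_neq0 addrC natr1 pnatr_eq0.
Qed.

Lemma coef_dbell_poly n k : (dbell_poly lam n)`_k = dstirling2 lam n k.
Proof.
have -> : dbell_poly lam n = \poly_(k < n.+1) dstirling2 lam n k by rewrite poly_def.
by rewrite coef_poly; case: ltnP => // ?; rewrite dstirling2_small.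
Qed.

Lemma sum_dstirling2_divn n : (0 < n)%N ->
  \sum_(1 <= k < n.+1) (dstirling2 lam n k / k%:R) *: 'X^k
    = n%:R^-1 *: \sum_(0 <= j < n) ('C(n, j)%:R * B j) *: dbell_poly lam (n - j).
Proof.
move=> n_gt0.
rewrite [LHS](_ : _ = \poly_(k < n.+1) (dstirling2 lam n k / k%:R)); last first.
  rewrite poly_def big_add1 big_mkord big_ord_recl.
  by rewrite mulr0n invr0 mulr0 scale0r add0r.
apply/polyP => i; rewrite coef_poly coefZ coef_sum.
under eq_bigr do rewrite coefZ coef_dbell_poly.
by rewrite -dstirling2_divn //; case: ltnP => // ?; rewrite dstirling2_small ?mul0r.
Qed.

End DegenerateBernoulli.

Theorem theorem12 (R : realFieldType) (lam : R) (n : nat)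
    (S : nat -> nat -> R) (beta : R -> nat -> R) :
  lam != 0 -> (1 <= n)%N ->
  is_dstirling2 lam S -> is_dbernoulli lam beta ->
  (\sum_(1 <= k < n.+1) (S n k / k%:R) *: 'X^k
     = n%:R^-1 *: \sum_(0 <= j < n)
          ('C(n, j)%:R * beta (1 - lam) j) *: dbell_poly lam (n - j)%N)
  /\
  (\sum_(1 <= k < n.+1) S n k / k%:R
     = n%:R^-1 * \sum_(0 <= j < n)
          'C(n, j)%:R * beta (1 - lam) j * dbell lam (n - j)%N).
Proof.
move=> _ n_gt0 S_dS beta_dB.
have poly_eq : \sum_(1 <= k < n.+1) (S n k / k%:R) *: 'X^k
    = n%:R^-1 *: \sum_(0 <= j < n)
        ('C(n, j)%:R * beta (1 - lam) j) *: dbell_poly lam (n - j)%N.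
  rewrite -(sum_dstirling2_divn beta_dB n_gt0) !big_nat.
  apply: eq_bigr => k /andP [_ le_kn].
  by rewrite (is_dstirling2_uniq S_dS (le_kn : (k <= n)%N)).
split=> //; move/(congr1 (horner^~ 1)): poly_eq.
rewrite hornerZ !horner_sum.
under eq_bigr do rewrite hornerZ hornerXn expr1n mulr1.
by under [in X in _ = X -> _]eq_bigr do rewrite hornerZ.
Qed.
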